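(* Consider a $K$-armed bandit with reward vector $r\in[0,1]^K$ having distinct entries, $V^*=\max_a r(a)$, any temperature $\eta\in(0,\infty)$, and the discrete DG update $\theta_{t+1}(a)=\theta_t(a)+\alpha w_t(a)U_t(a)$ with sufficiently small step size $\alpha>0$ (as required for $\pi_{\theta_t}$ to converge to the optimal one-hot policy). Then $\delta_t:=V^*-\pi_{\theta_t}^\top r=O(1/t)$.
   Context: Softmax policy $\pi_\theta(a)=e^{\theta(a)}/\sum_{a'}e^{\theta(a')}$; $\pi_t=\pi_{\theta_t}$; $U_t(a):=r(a)-\pi_t^\top r$, $\ell_t(a):=-\log\pi_t(a)$, $w_t(a):=\sigma(U_t(a)\ell_t(a)/\eta)$ with $\sigma(x)=1/(1+e^{-x})$. *)

From mathcomp Require Import all_boot all_order all_algebra.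
From mathcomp Require Import all_classical all_reals all_analysis.
Set Implicit Arguments. Unset Strict Implicit. Unset Printing Implicit Defensive.
Import Order.TTheory GRing.Theory Num.Theory.
Local Open Scope ring_scope.

Section DG.
Variables (R : realType) (K : nat).

Definition softmax (theta : 'I_K -> R) (a : 'I_K) : R :=
  expR (theta a) / \sum_(b < K) expR (theta b).

Definition value (theta : 'I_K -> R) (r : 'I_K -> R) : R :=
  \sum_(b < K) softmax theta b * r b.

(* V^* = max_a r(a) (r is nonnegative and K > 0 in the theorem, so this is
   the true maximum) *)
Definition Vstar (r : 'I_K -> R) : R := \big[Num.max/0]_(a < K) r a.

Definition sigmoid (x : R) : R := 1 / (1 + expR (- x)).

Definition adv (r : 'I_K -> R) (theta : 'I_K -> R) (a : 'I_K) : R :=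
  r a - value theta r.
Definition ell (theta : 'I_K -> R) (a : 'I_K) : R := - ln (softmax theta a).
Definition wgt (eta : R) (r : 'I_K -> R) (theta : 'I_K -> R) (a : 'I_K) : R :=
  sigmoid (adv r theta a * ell theta a / eta).

Fixpoint dg_theta (alpha eta : R) (r : 'I_K -> R) (theta0 : 'I_K -> R)
    (t : nat) : 'I_K -> R :=
  match t with
  | O => theta0
  | S t' => let th := dg_theta alpha eta r theta0 t' in
            fun a => th a + alpha * wgt eta r th a * adv r th a
  end.

Definition delta (alpha eta : R) (r : 'I_K -> R) (theta0 : 'I_K -> R)
    (t : nat) : R :=
  Vstar r - value (dg_theta alpha eta r theta0 t) r.

End DG.

(* Let s be an optimal arm.  While the logit gap theta_t(s) - theta_t(b) is
   nonpositive, arm b has at least the probability, hence at most the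
   surprisal ell, of s, and also at most its advantage; so its weight and its
   increment are dominated by those of s and the gap cannot decrease.  Since
   every increment is at most alpha, the gap never falls below
   min(theta_0(s) - theta_0(b), -alpha), so pi_t(s) stays above a constant
   p > 0.  The new policy is pi_t reweighted by exp(alpha w_t U_t), which
   gives a gain of at least pi_t(s) (exp(alpha w_t(s) U_t(s)) - 1) U_t(s) / e
   >= (alpha p / 2e) delta_t^2 per step, and a recursion
   delta_{t+1} <= delta_t - c delta_t^2 forces delta_t <= 1 / (c (t+1)). *)
From mathcomp Require Import all_boot all_order all_algebra.
From mathcomp Require Import all_classical all_reals all_analysis.
From mathcomp Require Import ring lra.
Set Implicit Arguments. Unset Strict Implicit. Unset Printing Implicit Defensive.
Import Order.TTheory GRing.Theory Num.Theory.
Local Open Scope ring_scope.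

Lemma quadratic_recursion_decay (R : realFieldType) (c : R) (x : nat -> R) :
  0 < c -> (forall t, 0 <= x t) -> (forall t, x t.+1 <= x t - c * x t ^+ 2) ->
  forall t, x t <= c^-1 / t.+1%:R.
Proof.
move=> c_gt0 x_ge0 x_rec.
pose z t := c * x t.
have z_ge0 t : 0 <= z t := mulr_ge0 (ltW c_gt0) (x_ge0 t).
have z_rec t : z t.+1 <= z t - z t ^+ 2.
  have -> : z t - z t ^+ 2 = c * (x t - c * x t ^+ 2) by rewrite /z; ring.
  by apply: ler_wpM2l; [exact: ltW | exact: x_rec].
(* z_{t+1} >= 0 forces z_t <= 1 *)
have z_le1 t : z t <= 1.
  have := z_rec t; have := z_ge0 t.+1; have := z_ge0 t; nra.
suff z_decay t : z t * t.+1%:R <= 1.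
  move=> t; rewrite ler_pdivlMr ?ltr0n // -(ler_pM2l c_gt0) divff ?gt_eqF //.
  by rewrite mulrA; exact: z_decay.
elim: t => [|t IH]; first by rewrite mulr1.
have := z_rec t; have := z_le1 t; have := z_ge0 t; have := z_ge0 t.+1.
rewrite -[t.+2]addn1 natrD; move: IH; set n := t.+1%:R.
have n_ge0 : 0 <= n by rewrite ler0n.
(* with u = z_t n <= 1: 1 - z_t (1 - z_t) (n + 1) = (1 - u) (1 - z_t) + z_t^2 *)
nra.
Qed.

Lemma sigmoid_gt0 (R : realType) (x : R) : 0 < sigmoid x.
Proof. by rewrite /sigmoid divr_gt0 // addr_gt0 // expR_gt0. Qed.

Lemma sigmoid_le1 (R : realType) (x : R) : sigmoid x <= 1.
Proof.
by rewrite /sigmoid ler_pdivrMr ?addr_gt0 ?expR_gt0 // mul1r lerDl ltW ?expR_gt0.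
Qed.

Lemma sigmoid_ge_half (R : realType) (x : R) : 0 <= x -> 1 / 2 <= sigmoid x.
Proof.
move=> x_ge0; rewrite /sigmoid ler_pdivlMr ?addr_gt0 ?expR_gt0 //.
have : expR (- x) <= 1 by rewrite -expR0 ler_expR lerNl oppr0.
lra.
Qed.

Lemma ler_sigmoid (R : realType) : {homo @sigmoid R : x y / x <= y}.
Proof.
move=> x y le_xy; rewrite /sigmoid ler_pdivrMr ?addr_gt0 ?expR_gt0 //.
by rewrite mulrAC ler_pdivlMr ?addr_gt0 ?expR_gt0 // !mul1r lerD2l ler_expR lerN2.
Qed.

Lemma expR_sub1_mul_ge0 (R : realType) (d u : R) :
  0 <= d * u -> 0 <= (expR d - 1) * u.
Proof.
case: (ltrgtP d 0) => [d_lt0|d_gt0|->]; last by rewrite expR0 subrr mul0r.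
- rewrite nmulr_rge0 // => u_le0; rewrite nmulr_rge0 // subr_lt0.
  by rewrite -expR0 ltr_expR.
- rewrite pmulr_rge0 // => u_ge0; rewrite pmulr_rge0 // subr_gt0.
  by rewrite -expR0 ltr_expR.
Qed.

Section Softmax.
Variables (R : realType) (K : nat).
Hypothesis K_gt0 : (0 < K)%N.
Implicit Types (th d r m : 'I_K -> R) (a b s : 'I_K).

Lemma exists_argmax r : exists s, forall b, r b <= r s.
Proof.
exists [arg max_(i > Ordinal K_gt0) r i]%O.
by case: arg_maxP => // s _ s_max b; exact: s_max.
Qed.

Lemma Vstar_argmax r s : 0 <= r s -> (forall b, r b <= r s) -> Vstar r = r s.
Proof.
move=> r_s_ge0 s_max; apply/le_anti; rewrite le_bigmax andbT.
by apply: bigmax_le => // b _; exact: s_max.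
Qed.

Lemma sum_expR_gt0 th : 0 < \sum_(b < K) expR (th b).
Proof.
rewrite (bigD1 (Ordinal K_gt0)) //= ltr_pwDl ?expR_gt0 //.
by rewrite sumr_ge0 // => b _; rewrite ltW ?expR_gt0.
Qed.

Lemma softmax_gt0 th a : 0 < softmax th a.
Proof. by rewrite /softmax divr_gt0 ?expR_gt0 ?sum_expR_gt0. Qed.

Lemma sum_softmax th : \sum_(b < K) softmax th b = 1.
Proof. by rewrite /softmax -mulr_suml divff // gt_eqF ?sum_expR_gt0. Qed.

Lemma softmax_le1 th a : softmax th a <= 1.
Proof.
rewrite -(sum_softmax th) (bigD1 a) //= lerDl.
by rewrite sumr_ge0 // => b _; rewrite ltW ?softmax_gt0.
Qed.

Lemma ell_ge0 th a : 0 <= ell th a.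
Proof. by rewrite /ell oppr_ge0 ln_le0 // softmax_le1. Qed.

Lemma value_ge0 th r : (forall a, 0 <= r a) -> 0 <= value th r.
Proof.
by move=> r_ge0; apply: sumr_ge0 => b _; rewrite mulr_ge0 // ltW ?softmax_gt0.
Qed.

Lemma value_le th r (M : R) : (forall a, r a <= M) -> value th r <= M.
Proof.
move=> r_le; rewrite /value -[leRHS]mul1r -(sum_softmax th) mulr_suml.
by apply: ler_sum => b _; apply: ler_wpM2l; [exact/ltW/softmax_gt0 | exact: r_le].
Qed.

Lemma adv_argmax_ge0 th r s : (forall b, r b <= r s) -> 0 <= adv r th s.
Proof. by move=> s_max; rewrite subr_ge0 value_le. Qed.

Lemma adv_bound th r b : (forall a, 0 <= r a <= 1) -> -1 <= adv r th b <= 1.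
Proof.
move=> r01; have /andP[r_ge0 r_le1] := r01 b.
have := value_ge0 th (fun a => proj1 (andP (r01 a))).
have := value_le th (fun a => proj2 (andP (r01 a))).
by rewrite /adv; lra.
Qed.

Lemma softmax_ge_inv_sum th m s :
  (forall b, m b <= th s - th b) -> (\sum_(b < K) expR (- m b))^-1 <= softmax th s.
Proof.
move=> m_le.
have -> : softmax th s = (\sum_(b < K) expR (th b - th s))^-1.
  rewrite /softmax [in RHS](eq_bigr (fun b => expR (th b) * expR (- th s))).
    by rewrite -mulr_suml invfM expRN invrK mulrC.
  by move=> b _; rewrite expRD.
rewrite lef_pV2 ?posrE ?sum_expR_gt0 //.
by apply: ler_sum => b _; rewrite ler_expR; have := m_le b; lra.
Qed.

Lemma softmax_shift th d b :
  softmax (fun a => th a + d a) b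
  = softmax th b * expR (d b) / \sum_(a < K) softmax th a * expR (d a).
Proof.
have -> : \sum_(a < K) softmax th a * expR (d a)
          = (\sum_(a < K) expR (th a + d a)) / \sum_(a < K) expR (th a).
  by rewrite mulr_suml; apply: eq_bigr => a _; rewrite /softmax expRD mulrAC.
by rewrite /softmax expRD; field; rewrite !gt_eqF ?sum_expR_gt0.
Qed.

Lemma sum_softmax_expR_gt0 th d : 0 < \sum_(b < K) softmax th b * expR (d b).
Proof.
rewrite (bigD1 (Ordinal K_gt0)) //=; apply: ltr_pwDl.
  by rewrite mulr_gt0 ?softmax_gt0 ?expR_gt0.
by apply: sumr_ge0 => b _; rewrite mulr_ge0 // ltW ?softmax_gt0 ?expR_gt0.
Qed.

Lemma value_shift th d r :
  value (fun a => th a + d a) r - value th r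
  = (\sum_(b < K) softmax th b * (expR (d b) - 1) * adv r th b)
    / \sum_(b < K) softmax th b * expR (d b).
Proof.
set Z := \sum_(b < K) softmax th b * expR (d b).
have Z_neq0 : Z != 0 by rewrite gt_eqF ?sum_softmax_expR_gt0.
have -> : value (fun a => th a + d a) r
          = (\sum_(b < K) softmax th b * expR (d b) * r b) / Z.
  by rewrite /value mulr_suml; apply: eq_bigr => b _; rewrite softmax_shift mulrAC.
have -> : \sum_(b < K) softmax th b * (expR (d b) - 1) * adv r th b
          = \sum_(b < K) softmax th b * expR (d b) * r b - value th r * Z.
  rewrite (eq_bigr (fun b => softmax th b * expR (d b) * r b
      - value th r * (softmax th b * expR (d b))
      - (softmax th b * r b - value th r * softmax th b))) => [|b _]; last first.
    by rewrite /adv; ring.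
  by rewrite !sumrB -!mulr_sumr sum_softmax -/Z -/(value th r); ring.
by field.
Qed.

Lemma value_shift_gain th d r s :
  (forall b, 0 <= d b * adv r th b) -> (forall b, d b <= 1) ->
  softmax th s * (expR (d s) - 1) * adv r th s / expR 1
  <= value (fun a => th a + d a) r - value th r.
Proof.
move=> dU_ge0 d_le1.
have term_ge0 b : 0 <= softmax th b * (expR (d b) - 1) * adv r th b.
  by rewrite -mulrA mulr_ge0 ?expR_sub1_mul_ge0 // ltW ?softmax_gt0.
have Z_gt0 := sum_softmax_expR_gt0 th d.
have Z_le_e : \sum_(b < K) softmax th b * expR (d b) <= expR 1.
  apply: (@le_trans _ _ (\sum_(b < K) softmax th b * expR 1)).
    apply: ler_sum => b _; apply: ler_wpM2l; first exact/ltW/softmax_gt0.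
    by rewrite ler_expR d_le1.
  by rewrite -mulr_suml sum_softmax mul1r.
rewrite value_shift.
apply: le_trans (_ : _ / \sum_(b < K) softmax th b * expR (d b) <= _).
  by apply: ler_wpM2l; [exact: term_ge0 | rewrite lef_pV2 ?posrE ?expR_gt0].
apply: ler_wpM2r; first by rewrite invr_ge0 ltW.
by rewrite (bigD1 s) //= lerDl sumr_ge0.
Qed.

End Softmax.

Section DGStep.
Variables (R : realType) (K : nat) (alpha eta : R) (r : 'I_K -> R) (s : 'I_K).
Hypotheses (K_gt0 : (0 < K)%N) (r01 : forall a, 0 <= r a <= 1)
  (s_max : forall b, r b <= r s) (eta_gt0 : 0 < eta) (alpha_gt0 : 0 < alpha).
Implicit Types (th : 'I_K -> R) (b : 'I_K).

Definition dg_incr th b := alpha * wgt eta r th b * adv r th b.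
Definition dg_step th b := th b + dg_incr th b.

Lemma wgt_bound th b : 0 <= wgt eta r th b <= 1.
Proof. by rewrite ltW ?sigmoid_gt0 ?sigmoid_le1. Qed.

Lemma wgt_argmax_ge_half th : 1 / 2 <= wgt eta r th s.
Proof.
apply/sigmoid_ge_half/divr_ge0; last exact: ltW.
exact: mulr_ge0 (adv_argmax_ge0 K_gt0 th s_max) (ell_ge0 K_gt0 th s).
Qed.

Lemma dg_incr_le th b : dg_incr th b <= alpha.
Proof.
have /andP[w_ge0 w_le1] := wgt_bound th b.
have /andP[_ U_le1] := adv_bound K_gt0 th b r01.
by rewrite /dg_incr -mulrA ler_piMr ?(ltW alpha_gt0) //; nra.
Qed.

Lemma dg_incr_mul_adv_ge0 th b : 0 <= dg_incr th b * adv r th b.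
Proof.
have /andP[w_ge0 _] := wgt_bound th b.
rewrite /dg_incr -mulrA -expr2.
exact: mulr_ge0 (mulr_ge0 (ltW alpha_gt0) w_ge0) (sqr_ge0 _).
Qed.

Lemma dg_incr_argmax_ge0 th : 0 <= dg_incr th s.
Proof.
have /andP[w_ge0 _] := wgt_bound th s.
rewrite /dg_incr mulr_ge0 ?(mulr_ge0 (ltW alpha_gt0) w_ge0) //.
exact: (adv_argmax_ge0 K_gt0).
Qed.

Lemma dg_incr_le_argmax th b : th s <= th b -> dg_incr th b <= dg_incr th s.
Proof.
move=> le_sb; have /andP[wb_ge0 _] := wgt_bound th b.
have [Ub_le0 | Ub_gt0] := lerP (adv r th b) 0.
  apply: le_trans (dg_incr_argmax_ge0 th).
  by rewrite /dg_incr mulr_ge0_le0 // mulr_ge0 // ltW.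
have Ub_le : adv r th b <= adv r th s by rewrite lerD2r.
have pi_le : softmax th s <= softmax th b.
  apply: ler_wpM2r; first by rewrite invr_ge0 ltW ?(sum_expR_gt0 K_gt0).
  by rewrite ler_expR.
have ell_le : ell th b <= ell th s.
  by rewrite /ell lerN2 ler_ln ?posrE ?(softmax_gt0 K_gt0).
have w_le : wgt eta r th b <= wgt eta r th s.
  apply: ler_sigmoid; apply: ler_wpM2r; first by rewrite invr_ge0 ltW.
  by apply: ler_pM => //; [exact: ltW | exact: (ell_ge0 K_gt0)].
rewrite /dg_incr; apply: ler_pM; last exact: Ub_le.
- exact: mulr_ge0 (ltW alpha_gt0) wb_ge0.
- exact: ltW.
- by apply: ler_wpM2l; [exact: ltW | exact: w_le].
Qed.

Lemma dg_gap_step th b :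
  Num.min (th s - th b) (- alpha) <= dg_step th s - dg_step th b.
Proof.
rewrite /dg_step ge_min; have [le_sb | lt_bs] := lerP (th s) (th b).
  by have := dg_incr_le_argmax le_sb; lra.
by have := dg_incr_argmax_ge0 th; have := dg_incr_le th b; lra.
Qed.

Lemma dg_value_gain th : alpha <= 1 ->
  softmax th s * alpha * adv r th s ^+ 2 / (2 * expR 1)
  <= value (dg_step th) r - value th r.
Proof.
move=> alpha_le1; have d_le1 b := le_trans (dg_incr_le th b) alpha_le1.
apply: le_trans (value_shift_gain K_gt0 s (dg_incr_mul_adv_ge0 th) d_le1).
have U_ge0 : 0 <= adv r th s := adv_argmax_ge0 K_gt0 th s_max.
have incr_ge : alpha * adv r th s / 2 <= dg_incr th s.
  have := ler_wpM2l (mulr_ge0 (ltW alpha_gt0) U_ge0) (wgt_argmax_ge_half th).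
  by rewrite /dg_incr; lra.
have exp_ge := expR_ge1Dx (dg_incr th s).
have -> : softmax th s * alpha * adv r th s ^+ 2 / (2 * expR 1)
          = softmax th s * adv r th s / expR 1 * (alpha * adv r th s / 2).
  by field; rewrite gt_eqF ?expR_gt0.
have -> : softmax th s * (expR (dg_incr th s) - 1) * adv r th s / expR 1
          = softmax th s * adv r th s / expR 1 * (expR (dg_incr th s) - 1) by ring.
apply: ler_wpM2l; last by lra.
exact: divr_ge0 (mulr_ge0 (ltW (softmax_gt0 K_gt0 th s)) U_ge0) (ltW (expR_gt0 1)).
Qed.

Variable theta0 : 'I_K -> R.
Local Notation theta := (dg_theta alpha eta r theta0).

Lemma dg_gap_lower t b :
  Num.min (theta0 s - theta0 b) (- alpha) <= theta t s - theta t b.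
Proof.
elim: t => [|t IH]; first by rewrite ge_min lexx.
apply: le_trans (dg_gap_step (theta t) b).
by rewrite le_min IH ge_min lexx orbT.
Qed.

Lemma delta_eq_adv t : delta alpha eta r theta0 t = adv r (theta t) s.
Proof.
by have /andP[r_s_ge0 _] := r01 s; rewrite /delta (Vstar_argmax r_s_ge0 s_max).
Qed.

Lemma delta_ge0 t : 0 <= delta alpha eta r theta0 t.
Proof. by rewrite delta_eq_adv (adv_argmax_ge0 K_gt0). Qed.

Lemma delta_succ_le t : alpha <= 1 ->
  delta alpha eta r theta0 t.+1 <= delta alpha eta r theta0 t
    - alpha * softmax (theta t) s / (2 * expR 1) * delta alpha eta r theta0 t ^+ 2.
Proof.
move=> alpha_le1; have := dg_value_gain (theta t) alpha_le1.
rewrite !delta_eq_adv /adv; change (theta t.+1) with (dg_step (theta t)); lra.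
Qed.

Let p := (\sum_(b < K) expR (- Num.min (theta0 s - theta0 b) (- alpha)))^-1.

Lemma dg_rate_gt0 : 0 < alpha * p / (2 * expR 1).
Proof.
by rewrite divr_gt0 ?mulr_gt0 ?expR_gt0 // invr_gt0 (sum_expR_gt0 K_gt0).
Qed.

Lemma delta_quadratic_decrease t : alpha <= 1 ->
  delta alpha eta r theta0 t.+1 <= delta alpha eta r theta0 t
    - alpha * p / (2 * expR 1) * delta alpha eta r theta0 t ^+ 2.
Proof.
move=> alpha_le1; apply: le_trans (delta_succ_le t alpha_le1) _.
rewrite lerD2l lerN2; apply: ler_wpM2r; first exact: sqr_ge0.
apply: ler_wpM2r; first by rewrite invr_ge0 ltW // mulr_gt0 // expR_gt0.
apply: ler_wpM2l; first exact: ltW.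
by have := softmax_ge_inv_sum K_gt0 (dg_gap_lower t).
Qed.

End DGStep.

Theorem corollary3 (R : realType) (K : nat) (r : 'I_K -> R) (eta : R)
    (theta0 : 'I_K -> R) :
  (0 < K)%N ->
  (forall a, 0 <= r a <= 1) ->
  injective r ->
  0 < eta ->
  exists2 alpha0 : R, 0 < alpha0 &
    forall alpha : R, 0 < alpha -> alpha <= alpha0 ->
      exists C : R, forall t : nat,
        delta alpha eta r theta0 t <= C / t.+1%:R.
Proof.
move=> K_gt0 r01 _ eta_gt0.
have [s s_max] := exists_argmax K_gt0 r.
exists 1 => // alpha alpha_gt0 alpha_le1; eexists.
apply: quadratic_recursion_decay; last by move=> t; apply: delta_quadratic_decrease.
- by apply: dg_rate_gt0.
- by move=> t; apply: delta_ge0.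
Qed.
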